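(* Let $S=\langle x_1,\ldots,x_n\rangle$ be a right non-degenerate semigroup of skew type. Then $S$ has the over-jumping property: for every $a\in S$ and every $i\in\{1,\ldots,n\}$ there exist an integer $k\ge 1$ and $w\in S$ such that $aw=x_i^ka$.
   Context: A semigroup of skew type is a monoid $S$ with a monoid presentation $S=\langle x_1,\ldots,x_n \mid x_ix_j=x_kx_l\rangle$ consisting of $\binom{n}{2}$ relations, each of the form $x_ix_j=x_kx_l$ with $i\neq j$, $k\neq l$, such that every word $x_px_q$ with $p\neq q$ appears (as one side) in exactly one of the relations; $X=\{x_1,\ldots,x_n\}$. For $a,b\in X$, the partner of $ab$ is the other side of the unique defining relation containing $ab$ if $a\neq b$, and $ab$ itself if $a=b$. $S$ is right non-degenerate if for every $x\in X$ the map $X\to X$ sending $y$ to the first letter of the partner of $xy$ is surjective. *)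

From mathcomp Require Import all_boot.
Set Implicit Arguments. Unset Strict Implicit. Unset Printing Implicit Defensive.

(* A two-letter word x_p x_q is represented by the pair (p, q) : 'I_n * 'I_n.
   A defining relation x_i x_j = x_k x_l is a pair of two-letter words. *)
Definition word2 (n : nat) := ('I_n * 'I_n)%type.
Definition relation2 (n : nat) := (word2 n * word2 n)%type.

Definition skew_type (n : nat) (rels : seq (relation2 n)) : Prop :=
  [/\ size rels = 'C(n, 2),
      all (fun r : relation2 n => (r.1.1 != r.1.2) && (r.2.1 != r.2.2)) rels &
      forall p q : 'I_n, p != q ->
        count (fun r : relation2 n => (r.1 == (p, q)) || (r.2 == (p, q))) rels = 1].

Definition partner (n : nat) (rels : seq (relation2 n)) (a b : 'I_n) : word2 n :=
  if a == b then (a, b) else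
  let r := nth ((a, b), (a, b)) rels
               (find (fun r : relation2 n => (r.1 == (a, b)) || (r.2 == (a, b))) rels) in
  if r.1 == (a, b) then r.2 else r.1.

Definition right_nondegenerate (n : nat) (rels : seq (relation2 n)) : Prop :=
  forall x : 'I_n, forall z : 'I_n, exists y : 'I_n, (partner rels x y).1 = z.

(* The congruence on the free monoid (words = seq 'I_n) generated by rels;
   the monoid S is the quotient of the free monoid by this congruence. *)
Inductive mcong (n : nat) (rels : seq (relation2 n)) : seq 'I_n -> seq 'I_n -> Prop :=
  | mcong_step : forall (u v : seq 'I_n) (r : relation2 n), r \in rels ->
      mcong rels (u ++ [:: r.1.1; r.1.2] ++ v) (u ++ [:: r.2.1; r.2.2] ++ v)
  | mcong_refl : forall u, mcong rels u u
  | mcong_sym : forall u v, mcong rels u v -> mcong rels v u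
  | mcong_trans : forall u v w, mcong rels u v -> mcong rels v w -> mcong rels u w.

(* Right non-degeneracy makes, for each generator z, the map y |-> y' with
   z y' = y t (for a suitable t) a well-defined injection of the generators, since
   the partner map is an involution.  Composing these along a word w gives a
   permutation G of the generators with w G(y) = y v, so iterating G up to its
   order at x yields w^j x = x v for some j >= 1.  Pushing powers of w past a
   word a one letter at a time then gives a v' with a v' = w^k a. *)
From mathcomp Require Import all_boot.
Set Implicit Arguments. Unset Strict Implicit. Unset Printing Implicit Defensive.

Section Congruence.
Variables (n : nat) (rels : seq (relation2 n)).

Lemma mcong_catl p u v : mcong rels u v -> mcong rels (p ++ u) (p ++ v).
Proof.
elim=> [u0 v0 r r_in | u0 | u0 v0 _ IH | u0 v0 w0 _ IH1 _ IH2].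
- by have := mcong_step (p ++ u0) v0 r_in; rewrite -!catA.
- exact: mcong_refl.
- exact: mcong_sym.
- exact: mcong_trans IH1 IH2.
Qed.

Lemma mcong_catr q u v : mcong rels u v -> mcong rels (u ++ q) (v ++ q).
Proof.
elim=> [u0 v0 r r_in | u0 | u0 v0 _ IH | u0 v0 w0 _ IH1 _ IH2].
- by have := mcong_step u0 (v0 ++ q) r_in; rewrite -!catA.
- exact: mcong_refl.
- exact: mcong_sym.
- exact: mcong_trans IH1 IH2.
Qed.

Definition wpow (w : seq 'I_n) k := flatten (nseq k w).

Lemma wpowS w k : wpow w k.+1 = w ++ wpow w k.
Proof. by []. Qed.

Lemma wpowM w j l : wpow w (j * l) = wpow (wpow w j) l.
Proof.
elim: l => [|l IH]; first by rewrite muln0.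
by rewrite mulnS /wpow nseqD flatten_cat -/(wpow w (j * l)) IH.
Qed.

Lemma wpow_nseq (i : 'I_n) k : wpow [:: i] k = nseq k i.
Proof. by elim: k => //= k IH; rewrite wpowS IH. Qed.

Lemma mcong_wpow_commute W V a : mcong rels (W ++ a) (a ++ V) ->
  forall l, mcong rels (wpow W l ++ a) (a ++ wpow V l).
Proof.
move=> WaV; elim=> [|l IH]; first by rewrite cats0; apply: mcong_refl.
rewrite wpowS -catA; apply: mcong_trans (mcong_catl W IH) _.
by rewrite wpowS !catA; apply: mcong_catr.
Qed.

End Congruence.

Section SkewType.
Variables (n : nat) (rels : seq (relation2 n)).
Hypothesis rels_skew : skew_type rels.

Definition has_side (a b : 'I_n) : pred (relation2 n) :=
  fun r => (r.1 == (a, b)) || (r.2 == (a, b)).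

Lemma has_side_uniq a b : a != b ->
  {in rels &, forall r1 r2, has_side a b r1 -> has_side a b r2 -> r1 = r2}.
Proof.
case: rels_skew => _ _ count1 ab r1 r2 r1_in r2_in r1ab r2ab.
have := count1 a b ab; rewrite -size_filter.
case E: (filter _ rels) => [|r [|? ?]] //= _.
have m1 : r1 \in filter (has_side a b) rels by rewrite mem_filter r1ab r1_in.
have m2 : r2 \in filter (has_side a b) rels by rewrite mem_filter r2ab r2_in.
by move: m1 m2; rewrite E !inE => /eqP -> /eqP ->.
Qed.

Lemma partner_relation a b : a != b -> exists2 r, r \in rels &
  r = ((a, b), partner rels a b) \/ r = (partner rels a b, (a, b)).
Proof.
case: rels_skew => _ _ count1 ab.
have has_ab : has (has_side a b) rels by rewrite has_count count1.
set r := nth ((a, b), (a, b)) rels (find (has_side a b) rels).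
have r_in : r \in rels by rewrite mem_nth // -has_find.
have : has_side a b r by apply: nth_find.
move=> r_ab; exists r => //; rewrite /partner (negbTE ab) -/r; clearbody r.
case: r {r_in} r_ab => r1 r2; rewrite /has_side /=; case: eqP => [-> _ | _ /eqP ->]; by [left | right].
Qed.

Lemma mcong_partner a b u v :
  mcong rels (u ++ [:: a; b] ++ v)
             (u ++ [:: (partner rels a b).1; (partner rels a b).2] ++ v).
Proof.
have [<- | ab] := eqVneq a b; first by rewrite /partner eqxx; apply: mcong_refl.
have [r r_in [rE | rE]] := partner_relation ab.
  by have := mcong_step u v r_in; rewrite rE.
by apply: mcong_sym; have := mcong_step u v r_in; rewrite rE.
Qed.

Lemma partner_invol a b :
  partner rels (partner rels a b).1 (partner rels a b).2 = (a, b).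
Proof.
have [<- | ab] := eqVneq a b; first by rewrite /partner !eqxx.
have [r r_in rE] := partner_relation ab.
case: (partner rels a b) rE => c d /= rE.
have cd : c != d.
  case: rels_skew => _ /allP/(_ r r_in)/andP[].
  by case: rE => -> /=.
have [r' r'_in r'E] := partner_relation cd.
have r'r : r' = r.
  apply: (has_side_uniq cd) => //; rewrite /has_side.
    by case: r'E => ->; rewrite eqxx ?orbT.
  by case: rE => ->; rewrite eqxx ?orbT.
by move: r'E; rewrite r'r; case: rE => -> [] e; congruence.
Qed.

Lemma partner_inj a b a' b' :
  partner rels a b = partner rels a' b' -> (a, b) = (a', b').
Proof. by move=> e; rewrite -(partner_invol a b) e partner_invol. Qed.

Hypothesis rels_rnd : right_nondegenerate rels.

Definition cofactor (y z : 'I_n) : 'I_n :=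
  odflt y [pick t | (partner rels y t).1 == z].

Lemma partner_cofactor y z : (partner rels y (cofactor y z)).1 = z.
Proof.
rewrite /cofactor; case: pickP => [t /eqP // | none].
by have [t Ht] := rels_rnd y z; have := none t; rewrite Ht eqxx.
Qed.

Definition slide (z y : 'I_n) : 'I_n := (partner rels y (cofactor y z)).2.

Lemma slide_inj z : injective (slide z).
Proof.
move=> y y' e; suff [] : (y, cofactor y z) = (y', cofactor y' z) by [].
apply: partner_inj; move: e (partner_cofactor y z) (partner_cofactor y' z).
rewrite /slide; case: (partner rels y _) => ? ?; case: (partner rels y' _) => ? ?.
by move=> /= -> -> ->.
Qed.

Lemma mcong_slide z y v :
  mcong rels [:: z, slide z y & v] [:: y, cofactor y z & v].
Proof.
apply: mcong_sym; have := mcong_partner y (cofactor y z) [::] v.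
by rewrite partner_cofactor.
Qed.

Lemma word_slide w : exists2 G : 'I_n -> 'I_n, injective G &
  forall y, exists v, mcong rels (w ++ [:: G y]) (y :: v).
Proof.
elim: w => [|z w [G G_inj HG]].
  by exists id => // y; exists [::]; apply: mcong_refl.
exists (G \o slide z) => [|y]; first exact: inj_comp G_inj (@slide_inj z).
have [v wGv] := HG (slide z y).
exists (cofactor y z :: v).
apply: mcong_trans (mcong_catl [:: z] wGv) _.
exact: mcong_slide.
Qed.

Lemma over_jump_letter w x : exists2 j, 0 < j &
  exists v, mcong rels (wpow w j ++ [:: x]) (x :: v).
Proof.
have [G G_inj HG] := word_slide w.
have iterG j y : exists v, mcong rels (wpow w j ++ [:: iter j G y]) (y :: v).
  elim: j y => [|j IH] y; first by exists [::]; apply: mcong_refl.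
  have [v1 Hv1] := IH (G y); have [v2 Hv2] := HG y.
  exists (v2 ++ v1); rewrite iterSr wpowS -catA.
  apply: mcong_trans (mcong_catl w Hv1) _.
  by have := mcong_catr v1 Hv2; rewrite -catA.
exists (fingraph.order G x); first exact: order_gt0.
by have := iterG (fingraph.order G x) x; rewrite iter_order.
Qed.

Lemma over_jump w a : exists2 k, 0 < k &
  exists v, mcong rels (a ++ v) (wpow w k ++ a).
Proof.
elim: a w => [|x a IH] w.
  by exists 1 => //; exists (wpow w 1); rewrite cats0; apply: mcong_refl.
have [j j_gt0 [v wx_xv]] := over_jump_letter w x.
have [l l_gt0 [v' av'_va]] := IH v.
exists (j * l); first by rewrite muln_gt0 j_gt0.
exists v'; apply: mcong_trans (mcong_catl [:: x] av'_va) _.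
rewrite wpowM; apply: mcong_sym.
by have := mcong_catr a (mcong_wpow_commute (a := [:: x]) wx_xv l); rewrite -!catA.
Qed.

End SkewType.

Theorem proposition4p1 (n : nat) (rels : seq (relation2 n)) :
  skew_type rels -> right_nondegenerate rels ->
  forall (a : seq 'I_n) (i : 'I_n),
    exists k : nat, (1 <= k)%N /\
      exists w : seq 'I_n, mcong rels (a ++ w) (nseq k i ++ a).
Proof.
move=> skew rnd a i.
have [k k_gt0 [w aw]] := over_jump skew rnd [:: i] a.
by exists k; split=> //; exists w; rewrite -wpow_nseq.
Qed.
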